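(* Let $\mathcal{S}\subseteq 2^{[n]}$ be a Sperner family and let $h:\mathcal{S}\to 2^{[n]}$ be a function with $h(S)\subseteq S$ for every $S\in\mathcal{S}$. Then $\mathcal{F}=\mathcal{F}(\mathcal{S},h)$ is s-extremal with $\mathrm{Sh}(\mathcal{F})=\mathcal{H}(\mathcal{S})$ if and only if $|\mathcal{F}(\mathcal{S},h)|=|\mathcal{H}(\mathcal{S})|$.
   Context: $[n]=\{1,\dots,n\}$. A Sperner family is a family of sets none of which is contained in another. $\mathcal{F}\subseteq 2^{[n]}$ shatters $S$ if $\{F\cap S:F\in\mathcal{F}\}=2^S$; $\mathrm{Sh}(\mathcal{F})$ is the family of shattered sets; $\mathcal{F}$ is s-extremal if $|\mathrm{Sh}(\mathcal{F})|=|\mathcal{F}|$. For $H\subseteq S\subseteq[n]$: $\mathcal{P}_S=\{S\cup B: B\subseteq[n]\setminus S\}$ and $\mathcal{Q}_{S,H}=\{H\cup B: B\subseteq[n]\setminus S\}$. $\mathrm{Up}(\mathcal{S})=\bigcup_{S\in\mathcal{S}}\mathcal{P}_S$, $\mathcal{H}(\mathcal{S})=2^{[n]}\setminus\mathrm{Up}(\mathcal{S})$, and $\mathcal{F}(\mathcal{S},h)=2^{[n]}\setminus\bigcup_{S\in\mathcal{S}}\mathcal{Q}_{S,h(S)}$. *)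

From mathcomp Require Import all_boot.
Set Implicit Arguments. Unset Strict Implicit. Unset Printing Implicit Defensive.

(* Ground set [n] is modelled by 'I_n = {0,...,n-1}. Families are {set {set 'I_n}}. *)
Section Defs.
Variable n : nat.
Notation T := 'I_n.

Definition sperner (S : {set {set T}}) : Prop :=
  forall A B, A \in S -> B \in S -> A \subset B -> A = B.

Definition shatters (F : {set {set T}}) (X : {set T}) : bool :=
  [set G :&: X | G in F] == powerset X.

Definition Sh (F : {set {set T}}) : {set {set T}} := [set X | shatters F X].

Definition s_extremal (F : {set {set T}}) : Prop := #|Sh F| = #|F|.

Definition PP (S : {set T}) : {set {set T}} := [set S :|: B | B in powerset (~: S)].

Definition QQ (S H : {set T}) : {set {set T}} := [set H :|: B | B in powerset (~: S)].

Definition Up (SS : {set {set T}}) : {set {set T}} := \bigcup_(S in SS) PP S.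

Definition HH (SS : {set {set T}}) : {set {set T}} := ~: Up SS.

Definition FF (SS : {set {set T}}) (h : {set T} -> {set T}) : {set {set T}} :=
  ~: \bigcup_(S in SS) QQ S (h S).
End Defs.

From mathcomp Require Import all_boot.
Set Implicit Arguments. Unset Strict Implicit. Unset Printing Implicit Defensive.

(** Pajor's lemma gives |F| <= |Sh(F)| for every
    family F; it is proved by induction on the ground set, splitting F along an
    element x into its deletion {G in F | x \notin G} and its link
    {G \ x | G in F, x \in G}: sets shattered by their union are shattered by
    F, and so are the sets x |: Y for Y shattered by their intersection.
    On the other hand Sh(F(S,h)) is contained in H(S): if F(S,h) shattered a
    set X containing some S of the family, then some member G would satisfy
    G :&: X = h(S), hence G :&: S = h(S), i.e. G \in Q_{S,h(S)}, which F(S,h)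
    avoids.  Thus |F(S,h)| <= |Sh(F(S,h))| <= |H(S)|, and equality of the outer
    terms forces equality throughout. *)

Section Pajor.
Variable n : nat.
Local Notation T := 'I_n.
Implicit Types (F : {set {set T}}) (D G X Y Z : {set T}) (x : T).

Lemma shattersP F X :
  reflect (forall Z, Z \subset X -> exists2 G, G \in F & G :&: X = Z)
          (shatters F X).
Proof.
apply: (iffP eqP) => [trF Z ZX | trF].
  have : Z \in powerset X by rewrite inE.
  by rewrite -trF => /imsetP [G GF ->]; exists G.
apply/eqP; rewrite eqEsubset; apply/andP; split.
  by apply/subsetP => _ /imsetP [G _ ->]; rewrite inE subsetIr.
by apply/subsetP => Z; rewrite inE => /trF [G GF <-]; apply: imset_f.
Qed.

Lemma shattersS F1 F2 X : F1 \subset F2 -> shatters F1 X -> shatters F2 X.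
Proof.
move=> sF12 /shattersP shX; apply/shattersP => Z /shX [G GF1 GZ].
by exists G; rewrite ?(subsetP sF12).
Qed.

Lemma shatters_set0 F : F != set0 -> shatters F set0.
Proof.
case/set0Pn => G GF; apply/shattersP => Z; rewrite subset0 => /eqP ->.
by exists G; rewrite ?setI0.
Qed.

Lemma notin_shattered F x Y :
  (forall G, G \in F -> x \notin G) -> shatters F Y -> x \notin Y.
Proof.
move=> xF /shattersP/(_ Y (subxx Y)) [G GF GY].
by apply: contra (xF G GF) => xY; move: xY; rewrite -GY inE => /andP [].
Qed.

Lemma setD1I_notin x G Y : x \notin Y -> (G :\ x) :&: Y = G :&: Y.
Proof.
move=> xY; apply/setP => t; rewrite !inE.
by case: eqP => [-> | _]; rewrite ?(negbTE xY) ?andbF.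
Qed.

Definition deletion x F := [set G in F | x \notin G].
Definition link x F := [set G :\ x | G in F & x \in G].

Lemma card_deletion_link x F : #|F| = #|deletion x F| + #|link x F|.
Proof.
have -> : #|link x F| = #|[set G in F | x \in G]|.
  apply: card_in_imset => G1 G2; rewrite !inE => /andP [_ xG1] /andP [_ xG2] E.
  by rewrite -(setD1K xG1) -(setD1K xG2) E.
rewrite -(cardsID [set G : {set T} | x \notin G] F).
by congr (_ + _); apply: eq_card => G; rewrite !inE ?negbK andbC.
Qed.

Lemma notin_deletionUlink x F G :
  G \in deletion x F :|: link x F -> x \notin G.
Proof.
by case/setUP => [|/imsetP [G' _ ->]]; rewrite ?inE ?eqxx // => /andP [].
Qed.

Lemma notin_shattered_deletionUlink x F Y :
  shatters (deletion x F :|: link x F) Y -> x \notin Y.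
Proof. by apply: notin_shattered => G; apply: notin_deletionUlink. Qed.

Lemma notin_shattered_deletionIlink x F Y :
  shatters (deletion x F :&: link x F) Y -> x \notin Y.
Proof.
have sIU : deletion x F :&: link x F \subset deletion x F :|: link x F.
  by apply: subIset; rewrite subsetUl.
by move/(shattersS sIU)/notin_shattered_deletionUlink.
Qed.

Lemma shatters_deletionUlink x F Y :
  shatters (deletion x F :|: link x F) Y -> shatters F Y.
Proof.
move=> shY; have xY := notin_shattered_deletionUlink shY.
apply/shattersP => Z /(shattersP _ _ shY) [G].
case/setUP => [| /imsetP [G' ]]; first by rewrite inE => /andP [GF _]; exists G.
by rewrite inE => /andP [G'F _] -> <-; exists G'; rewrite ?setD1I_notin.
Qed.

Lemma shatters_deletionIlink x F Y :
  shatters (deletion x F :&: link x F) Y -> shatters F (x |: Y).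
Proof.
move=> shY; have xY := notin_shattered_deletionIlink shY.
apply/shattersP => Z ZxY; have [xZ | xZ] := boolP (x \in Z).
  have [|G0 /setIP [_ /imsetP [G ]]] := shattersP _ _ shY (Z :\ x).
    by rewrite subDset.
  rewrite inE => /andP [GF xG] -> GY; exists G => //; apply/setP => t.
  move/setP/(_ t): GY; rewrite !inE.
  by case: eqP => [-> _ | _]; rewrite ?xG ?xZ.
have [|G /setIP [] ] := shattersP _ _ shY Z.
  by move: ZxY; rewrite -subDset (setDidPl _) // disjoint_sym disjoints1.
rewrite inE => /andP [GF xG] _ GY; exists G => //; apply/setP => t.
by rewrite -GY !inE; case: eqP => // ->; rewrite (negbTE xG).
Qed.

Lemma card_Sh_deletion_link x F :
  #|Sh (deletion x F :|: link x F)| + #|Sh (deletion x F :&: link x F)|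
    <= #|Sh F|.
Proof.
set U := deletion x F :|: link x F; set I := deletion x F :&: link x F.
set xSh := [set x |: Y | Y in Sh I].
have <- : #|xSh| = #|Sh I|.
  apply: card_in_imset => Y1 Y2; rewrite !inE.
  move=> /notin_shattered_deletionIlink xY1 /notin_shattered_deletionIlink xY2.
  by move=> eqY; rewrite -(setU1K xY1) -(setU1K xY2) eqY.
have disj : [disjoint Sh U & xSh].
  rewrite disjoint_sym disjoint_subset; apply/subsetP => _Y /imsetP [Y _ ->].
  by rewrite !inE; apply/negP => /notin_shattered_deletionUlink; rewrite setU11.
rewrite -cardsUI (disjoint_setI0 disj) cards0 addn0 subset_leq_card //.
rewrite subUset; apply/andP; split; apply/subsetP => Y'.
  by rewrite !inE => /shatters_deletionUlink.
by case/imsetP => Y; rewrite !inE => /shatters_deletionIlink shY ->.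
Qed.

Lemma card_le_card_Sh F : #|F| <= #|Sh F|.
Proof.
suff bounded D F' : (forall G, G \in F' -> G \subset D) -> #|F'| <= #|Sh F'|.
  by apply: (bounded setT) => G _; apply: subsetT.
have [k] := ubnP #|D|; elim: k => // k IHk in D F' *; rewrite ltnS => leDk F'D.
have [D0 | [x xD]] := set_0Vmem D.
  have [-> | nzF'] := eqVneq F' set0; first by rewrite cards0.
  have F'0 : F' \subset [set set0].
    by apply/subsetP => G /F'D; rewrite D0 subset0 inE.
  apply: leq_trans (subset_leq_card F'0) _; rewrite cards1 card_gt0.
  by apply/set0Pn; exists set0; rewrite inE shatters_set0.
have ltD'k : #|D :\ x| < k by rewrite (cardsD1 x D) xD add1n in leDk.
have UD' G : G \in deletion x F' :|: link x F' -> G \subset D :\ x.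
  move=> GU; rewrite subsetD1 (notin_deletionUlink GU) andbT.
  case/setUP: GU => [| /imsetP [G' ]]; rewrite inE => /andP [/F'D G'D _] //.
  by move=> ->; rewrite subDset subsetU ?G'D ?orbT.
rewrite (card_deletion_link x) -cardsUI.
apply: leq_trans (card_Sh_deletion_link x F'); apply: leq_add.
  exact: IHk ltD'k UD'.
by apply: IHk ltD'k _ => G /setIP [GU _]; apply: UD'; rewrite inE GU.
Qed.

End Pajor.

Section ShatteredSetsOfF.
Variable n : nat.
Implicit Types (SS : {set {set 'I_n}}) (S H G X : {set 'I_n}).
Implicit Type h : {set 'I_n} -> {set 'I_n}.

Lemma mem_PP S X : (X \in PP S) = (S \subset X).
Proof.
apply/imsetP/idP => [[B _ ->] | SX]; first exact: subsetUl.
exists (X :\: S); first by rewrite inE subsetDr.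
by rewrite -{1}(setIidPr SX) setID.
Qed.

Lemma mem_QQ S H G : H \subset S -> (G \in QQ S H) = (G :&: S == H).
Proof.
move=> HS; apply/imsetP/eqP => [[B] | <-].
  rewrite inE -disjoints_subset => /disjoint_setI0 BS ->.
  by rewrite setIUl BS setU0 (setIidPl HS).
by exists (G :\: S); rewrite ?inE ?subsetDr ?setID.
Qed.

Lemma Sh_FF_subset_HH SS h :
  (forall S, S \in SS -> h S \subset S) -> Sh (FF SS h) \subset HH SS.
Proof.
move=> hS; apply/subsetP => X; rewrite !inE => /shattersP shX.
apply/bigcupP => [[S SS_S]]; rewrite mem_PP => SX; have hSS := hS S SS_S.
have [G] := shX (h S) (subset_trans hSS SX).
rewrite inE => /bigcupP GnQ GX; apply: GnQ; exists S => //.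
by rewrite mem_QQ // -{1}(setIidPr SX) setIA GX; apply/eqP/setIidPl.
Qed.

End ShatteredSetsOfF.

Theorem proposition7 (n : nat) (SS : {set {set 'I_n}}) (h : {set 'I_n} -> {set 'I_n}) :
  sperner SS ->
  (forall S, S \in SS -> h S \subset S) ->
  ((s_extremal (FF SS h) /\ Sh (FF SS h) = HH SS) <-> #|FF SS h| = #|HH SS|).
Proof.
move=> _ hS; split=> [[extF ShF] | cardF].
  by rewrite -ShF extF.
have ShF : Sh (FF SS h) = HH SS.
  by apply/eqP; rewrite eqEcard Sh_FF_subset_HH // -cardF card_le_card_Sh.
by split=> //; rewrite /s_extremal ShF cardF.
Qed.
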